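(* Let $\mathbf{A}$ be a (left and right) Ore domain. Then the following are equivalent: (ii) every finitely generated torsion-free (left or right) $\mathbf{A}$-module is stably free; (iii) every finitely generated left ideal and every finitely generated right ideal of $\mathbf{A}$ is stably free.
   Context: Rings are associative with $1$, not necessarily commutative. An Ore domain is a domain satisfying the left and right Ore conditions. A module $P$ over $\mathbf{A}$ is stably free if there exist integers $q\ge 0$, $r\ge 0$ with $P\oplus \mathbf{A}^{q}\cong \mathbf{A}^{q+r}$. A module $M$ over a domain is torsion-free if $am=0$ with $a\neq 0$ implies $m=0$. An Ore domain satisfying these equivalent conditions is called a semistably free ideal domain. *)

(* Noncommutative rings = nzRingType; a right A-module is a
   left module over the converse ring A^c. *)
From HB Require Import structures.
From mathcomp Require Import all_boot all_order all_algebra.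
Set Implicit Arguments. Unset Strict Implicit. Unset Printing Implicit Defensive.
Import GRing.Theory.
Local Open Scope ring_scope.

Definition is_domain (A : nzRingType) : Prop :=
  forall a b : A, a * b = 0 -> a = 0 \/ b = 0.

Definition left_ore (A : nzRingType) : Prop :=
  forall a b : A, a != 0 -> b != 0 ->
    exists c d : A, c * a = d * b /\ c * a != 0.

Definition right_ore (A : nzRingType) : Prop :=
  forall a b : A, a != 0 -> b != 0 ->
    exists c d : A, a * c = b * d /\ a * c != 0.

Definition ore_domain (A : nzRingType) : Prop :=
  is_domain A /\ left_ore A /\ right_ore A.

Definition fg_sub (A : nzRingType) (M : lmodType A) (S : {pred M}) : Prop :=
  exists (n : nat) (v : 'I_n -> M),
    forall x : M, x \in S <-> exists c : 'I_n -> A, x = \sum_(i < n) c i *: v i.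

Definition fg_module (A : nzRingType) (M : lmodType A) : Prop :=
  fg_sub (predT : {pred M}).

Definition torsion_free (A : nzRingType) (M : lmodType A) : Prop :=
  forall (a : A) (m : M), a != 0 -> a *: m = 0 -> m = 0.

(* The submodule S of M is stably free: S (+) A^q ≅ A^(q+r).
   An A-linear map h : S (+) A^q -> A^(q+r) is given by its two components
   f = h(-,0) (linear on S) and g = h(0,-) (linear), h(x,v) = f x + g v. *)
Definition stably_free_sub (A : nzRingType) (M : lmodType A) (S : {pred M})
  : Prop :=
  exists (q r : nat) (f : M -> 'rV[A]_(q + r)) (g : 'rV[A]_q -> 'rV[A]_(q + r)),
    (forall x y, x \in S -> y \in S -> f (x + y) = f x + f y) /\
        (forall (a : A) x, x \in S -> f (a *: x) = a *: f x) /\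
        (forall u v, g (u + v) = g u + g v) /\
        (forall (a : A) u, g (a *: u) = a *: g u) /\
        (forall x x' u u', x \in S -> x' \in S ->
            f x + g u = f x' + g u' -> x = x' /\ u = u') /\
        (forall w, exists x u, x \in S /\ f x + g u = w).

Definition stably_free (A : nzRingType) (M : lmodType A) : Prop :=
  stably_free_sub (predT : {pred M}).

(* left ideals of A = submodules of the regular left module A^o;
   right ideals = submodules of (A^c)^o (x *: y = y * x). *)
Definition fg_tf_left_modules_stably_free (A : nzRingType) : Prop :=
  forall M : lmodType A, fg_module M -> torsion_free M -> stably_free M.

Definition fg_left_ideals_stably_free (A : nzRingType) : Prop :=
  forall I : {pred A^o}, fg_sub I -> stably_free_sub I.

(* Right modules over A are left modules over the opposite ring A^c,
   itself an Ore domain (ore_domain_opp), so it suffices to prove, for an Ore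
   domain B, that f.g. torsion-free left B-modules are stably free iff f.g.
   left ideals of B are.

   (=>) A f.g. left ideal of a domain, viewed as a module (ideal_module), is
   f.g. and torsion-free; its stable freeness transfers to the ideal.

   (<=) A f.g. torsion-free module M embeds into some B^k
   (fg_torsion_free_embeds): generators are adjoined one at a time, either on
   a new coordinate, or -- when a w already lies in the embedded part for some
   a != 0 -- by rescaling coordinates on the right (right Ore condition), with
   injectivity coming from the left Ore condition.  The image is then a f.g.
   submodule of B^k, and these are stably free (free_submodule_stably_free) by
   induction on k: the first coordinates form a f.g. left ideal I, stably free
   hence projective (stably_free_lift), so S splits as I (+) K with K a f.g.
   submodule of B^(k-1), and direct sums of stably free modules are stably free
   (stably_free_sum). *)
From HB Require Import structures.
From mathcomp Require Import all_boot all_order all_algebra.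
From mathcomp Require Import boolp.
Set Implicit Arguments. Unset Strict Implicit. Unset Printing Implicit Defensive.
Import GRing.Theory.
Local Open Scope ring_scope.

Section Submodules.
Variables (B : nzRingType) (M V : lmodType B).

Record submodule (S : M -> Prop) : Prop := Submodule {
  sub0 : S 0;
  subD : forall x y, S x -> S y -> S (x + y);
  subZ : forall a x, S x -> S (a *: x) }.

Record linear_on (S : M -> Prop) (f : M -> V) : Prop := LinearOn {
  linD : forall x y, S x -> S y -> f (x + y) = f x + f y;
  linZ : forall a x, S x -> f (a *: x) = a *: f x }.

Lemma submoduleT : submodule (fun _ => True).
Proof. by []. Qed.

Lemma subN S x : submodule S -> S x -> S (- x).
Proof. by move=> hS Sx; rewrite -scaleN1r; apply: subZ. Qed.

Lemma subB S x y : submodule S -> S x -> S y -> S (x - y).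
Proof. by move=> hS Sx Sy; apply: (subD hS Sx); apply: subN. Qed.

Lemma linear_on0 S f : submodule S -> linear_on S f -> f 0 = 0.
Proof.
by move=> hS hf; rewrite -(scale0r (0 : M)) (linZ hf) ?scale0r //; exact: sub0.
Qed.

Lemma linearB_on S f x y : submodule S -> linear_on S f -> S x -> S y ->
  f (x - y) = f x - f y.
Proof.
move=> hS hf Sx Sy; rewrite -scaleN1r (linD hf) ?(linZ hf) ?scaleN1r //.
exact: (subN hS Sy).
Qed.

Lemma linear_on_sum S f n (v : 'I_n -> M) (c : 'I_n -> B) :
  submodule S -> linear_on S f -> (forall i, S (v i)) ->
  S (\sum_i c i *: v i) /\ f (\sum_i c i *: v i) = \sum_i c i *: f (v i).
Proof.
move=> hS hf Sv; apply: (big_rec2 (fun x y => S x /\ f x = y)).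
  by split; [exact: sub0 | exact: linear_on0 hf].
move=> i x y _ [Sx <-]; have Scv := subZ hS (c i) (Sv i).
by split; [exact: (subD hS Scv Sx) | rewrite (linD hf) ?(linZ hf)].
Qed.

Lemma submodule_sum S n (v : 'I_n -> M) (c : 'I_n -> B) :
  submodule S -> (forall i, S (v i)) -> S (\sum_i c i *: v i).
Proof.
move=> hS Sv; apply: big_ind => [|x y|i _]; [exact: sub0 | exact: subD | exact: subZ].
Qed.

Definition lspan n (v : 'I_n -> M) (x : M) : Prop :=
  exists c : 'I_n -> B, x = \sum_i c i *: v i.

Lemma lspan_submodule n (v : 'I_n -> M) : submodule (lspan v).
Proof.
split.
- by exists (fun _ => 0); rewrite big1 // => i _; rewrite scale0r.
- move=> _ _ [c ->] [d ->]; exists (fun i => c i + d i).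
  by rewrite -big_split; apply: eq_bigr => i _; rewrite scalerDl.
- move=> a _ [c ->]; exists (fun i => a * c i).
  by rewrite scaler_sumr; apply: eq_bigr => i _; rewrite scalerA.
Qed.

Lemma lspan_gen n (v : 'I_n -> M) i : lspan v (v i).
Proof.
exists (fun j => if j == i then 1 else 0).
rewrite (bigD1 i) //= eqxx scale1r big1 ?addr0 // => j /negbTE ->.
by rewrite scale0r.
Qed.

Definition fg_on (S : M -> Prop) : Prop :=
  exists n (v : 'I_n -> M), forall x, S x <-> lspan v x.

Lemma fg_on_ext (S S' : M -> Prop) :
  (forall x, S x <-> S' x) -> fg_on S -> fg_on S'.
Proof.
by move=> eS [n [v hv]]; exists n, v => x; rewrite -eS.
Qed.

Lemma fg_subP (S : {pred M}) : fg_sub S <-> fg_on (fun x => x \in S).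
Proof. by []. Qed.

Lemma fg_on_submodule S : fg_on S -> submodule S.
Proof.
move=> [n [v hv]]; have [h0 hD hZ] := lspan_submodule v.
by split=> [|x y|a x]; rewrite ?hv; auto.
Qed.

End Submodules.

Lemma fg_on_image (B : nzRingType) (M V : lmodType B) (S : M -> Prop)
    (f : M -> V) :
  fg_on S -> linear_on S f -> fg_on (fun y => exists2 x, S x & f x = y).
Proof.
move=> fgS hf; have hS := fg_on_submodule fgS; have [n [v hv]] := fgS.
have Sv i : S (v i) by apply/hv; exact: lspan_gen.
exists n, (fun i => f (v i)) => y; split.
  by move=> [x /hv [c ->] <-]; exists c; rewrite (linear_on_sum c hS hf Sv).2.
move=> [c ->]; have [Sx fx] := linear_on_sum c hS hf Sv.
by exists (\sum_i c i *: v i).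
Qed.

Section StablyFree.
Variable B : nzRingType.

(* S (+) B^q ~= B^N with N = q + r, via (x, u) |-> f x + g u; keeping the
   dimension N as a separate variable avoids casts between q + r and its
   rearrangements. *)
Definition stably_free_on (M : lmodType B) (S : M -> Prop) : Prop :=
  exists (q r N : nat) (f : M -> 'rV[B]_N) (g : 'rV[B]_q -> 'rV[B]_N),
    [/\ N = (q + r)%N, linear_on S f, linear_on (fun _ => True) g,
      forall x x' u u', S x -> S x' -> f x + g u = f x' + g u' ->
        x = x' /\ u = u'
      & forall w, exists x u, S x /\ f x + g u = w].

Lemma stably_free_subP (M : lmodType B) (S : {pred M}) :
  stably_free_sub S <-> stably_free_on (fun x => x \in S).
Proof.
split.
  move=> [q [r [f [g [fD [fZ [gD [gZ [inj sur]]]]]]]]].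
  by exists q, r, (q + r)%N, f, g.
move=> [q [r [N [f [g [EN [fD fZ] [gD gZ] inj sur]]]]]]; subst N.
by exists q, r, f, g; split; last split; auto.
Qed.

Lemma stably_free_on_ext (M : lmodType B) (S S' : M -> Prop) :
  (forall x, S x <-> S' x) -> stably_free_on S -> stably_free_on S'.
Proof.
move=> eS [q [r [N [f [g [EN [fD fZ] hg inj sur]]]]]].
exists q, r, N, f, g; split=> //.
- by split=> [x y|a x]; rewrite -!eS; auto.
- by move=> x x' u u'; rewrite -!eS; apply: inj.
- by move=> w; have [x [u [/eS Sx E]]] := sur w; exists x, u.
Qed.

Lemma stably_free_on_iso (M M' : lmodType B) (S : M -> Prop) (S' : M' -> Prop)
    (phi : M -> M') :
  linear_on S phi -> (forall x x', S x -> S x' -> phi x = phi x' -> x = x') ->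
  (forall y, S' y <-> exists2 x, S x & phi x = y) ->
  stably_free_on S' -> stably_free_on S.
Proof.
move=> [phiD phiZ] phi_inj phi_onto [q [r [N [f [g [EN [fD fZ] hg inj sur]]]]]].
have S'phi x : S x -> S' (phi x) by move=> Sx; apply/phi_onto; exists x.
exists q, r, N, (fun x => f (phi x)), g; split=> //.
- by split=> [x y Sx Sy|a x Sx]; rewrite ?phiD ?phiZ ?fD ?fZ; auto.
- move=> x x' u u' Sx Sx' E; have [e1 e2] := inj _ _ _ _ (S'phi _ Sx) (S'phi _ Sx') E.
  by split=> //; apply: phi_inj.
- by move=> w; have [_ [u [/phi_onto [x Sx <-] E]]] := sur w; exists x, u.
Qed.

Lemma stably_free_lift (M N : lmodType B) (S : M -> Prop) (I : N -> Prop)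
    (p : M -> N) :
  submodule S -> submodule I -> linear_on S p ->
  (forall a, I a -> exists2 x, S x & p x = a) -> stably_free_on I ->
  exists sec : N -> M, [/\ linear_on I sec, forall a, I a -> S (sec a)
                         & forall a, I a -> p (sec a) = a].
Proof.
move=> hS hI hp p_onto [q [r [K [fI [gI [_ hfI hgI inj sur]]]]]].
(* preimages (s j, u j) of the standard basis of B^K *)
have /fin_all_exists [su hsu] : forall j : 'I_K, exists s : (M * 'rV[B]_q)%type,
    [/\ S s.1, I (p s.1) & fI (p s.1) + gI s.2 = delta_mx 0 j].
  move=> j; have [a [u [Ia E]]] := sur (delta_mx 0 j).
  by have [x Sx pxa] := p_onto a Ia; exists (x, u); rewrite pxa.
have S_su j : S (su j).1 by case: (hsu j).
have I_su j : I (p (su j).1) by case: (hsu j).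
pose sec a := \sum_j fI a 0 j *: (su j).1.
exists sec; split.
- split=> [a b Ia Ib|c a Ia]; rewrite /sec (linD hfI, linZ hfI) //.
    by rewrite -big_split; apply: eq_bigr => j _; rewrite mxE scalerDl.
  by rewrite scaler_sumr; apply: eq_bigr => j _; rewrite mxE scalerA.
- by move=> a _; apply: submodule_sum.
move=> a Ia; pose c j := fI a 0 j.
have [_ psec] := linear_on_sum c hS hp S_su.
have [Ipsec fIpsec] := linear_on_sum c hI hfI I_su.
have [_ gIsum] :=
  linear_on_sum (v := fun j => (su j).2) c (submoduleT _) hgI (fun _ => Logic.I).
have gI0 : gI 0 = 0 := linear_on0 (submoduleT _) hgI.
have Ipa : I (p (sec a)) by rewrite psec.
have E : fI (p (sec a)) + gI (\sum_j c j *: (su j).2) = fI a + gI 0.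
  rewrite psec fIpsec gIsum gI0 addr0 -big_split /= [fI a]row_sum_delta.
  by apply: eq_bigr => j _; rewrite -scalerDr; case: (hsu j) => _ _ ->.
exact: (inj _ _ _ _ Ipa Ia E).1.
Qed.

Definition kernel_proj (M N : lmodType B) (p : M -> N) (sec : N -> M) (x : M) :
  M := x - sec (p x).

Lemma kernel_projP (M N : lmodType B) (S : M -> Prop) (I : N -> Prop)
    (p : M -> N) (sec : N -> M) :
  submodule S -> linear_on S p -> (forall x, S x -> I (p x)) ->
  linear_on I sec -> (forall a, I a -> S (sec a)) ->
  (forall a, I a -> p (sec a) = a) ->
  [/\ linear_on S (kernel_proj p sec), forall x, S x -> S (kernel_proj p sec x)
    & forall x, S x -> p (kernel_proj p sec x) = 0].
Proof.
move=> hS hp SI [secD secZ] S_sec p_sec; rewrite /kernel_proj.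
split=> [|x Sx|x Sx].
- split=> [x y Sx Sy|a x Sx].
    by rewrite (linD hp) // (secD _ _ (SI _ Sx) (SI _ Sy)) opprD addrACA.
  by rewrite (linZ hp) // (secZ _ _ (SI _ Sx)) scalerBr.
- exact: (subB hS Sx (S_sec _ (SI _ Sx))).
- by rewrite (linearB_on hS hp Sx (S_sec _ (SI _ Sx))) (p_sec _ (SI _ Sx)) subrr.
Qed.

Lemma stably_free_sum (M M1 M2 : lmodType B) (S : M -> Prop) (K : M1 -> Prop)
    (I : M2 -> Prop) (kap : M -> M1) (p : M -> M2) :
  linear_on S kap -> linear_on S p ->
  (forall x, S x -> K (kap x) /\ I (p x)) ->
  (forall x x', S x -> S x' -> kap x = kap x' -> p x = p x' -> x = x') ->
  (forall y a, K y -> I a -> exists x, [/\ S x, kap x = y & p x = a]) ->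
  stably_free_on K -> stably_free_on I -> stably_free_on S.
Proof.
move=> [kD kZ] [pD pZ] SKI kp_inj kp_onto.
move=> [qK [rK [NK [fK [gK [EK [fKD fKZ] [gKD gKZ] injK surK]]]]]].
move=> [qI [rI [NI [fI [gI [EI [fID fIZ] [gID gIZ] injI surI]]]]]].
exists (qK + qI)%N, (rK + rI)%N, (NK + NI)%N,
  (fun x => row_mx (fK (kap x)) (fI (p x))),
  (fun u => row_mx (gK (lsubmx u)) (gI (rsubmx u))); split.
- by rewrite EK EI addnACA.
- split=> [x y Sx Sy|a x Sx]; have [Kx Ix] := SKI x Sx.
    have [Ky Iy] := SKI y Sy.
    by rewrite kD ?pD ?fKD ?fID // add_row_mx.
  by rewrite kZ ?pZ ?fKZ ?fIZ // scale_row_mx.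
- split=> [u v _ _|a u _].
    by rewrite !linearD gKD ?gID // add_row_mx.
  by rewrite !linearZ gKZ ?gIZ // scale_row_mx.
- move=> x x' u u' Sx Sx'; have [Kx Ix] := SKI x Sx; have [Kx' Ix'] := SKI x' Sx'.
  rewrite !add_row_mx => /eq_row_mx [EKx EIx].
  have [e1 e2] := injK _ _ _ _ Kx Kx' EKx; have [e3 e4] := injI _ _ _ _ Ix Ix' EIx.
  by split; [apply: kp_inj | rewrite -(hsubmxK u) -(hsubmxK u') e2 e4].
- move=> w; have [y [uK [Ky EKw]]] := surK (lsubmx w).
  have [a [uI [Ia EIw]]] := surI (rsubmx w).
  have [x [Sx kx px]] := kp_onto y a Ky Ia.
  exists x, (row_mx uK uI); split=> //.
  by rewrite row_mxKl row_mxKr add_row_mx kx px EKw EIw hsubmxK.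
Qed.

End StablyFree.

Section FreeSubmodules.
Variable B : nzRingType.
Hypothesis ideals_sf : fg_left_ideals_stably_free B.

Lemma fg_ideal_stably_free (I : B^o -> Prop) : fg_on I -> stably_free_on I.
Proof.
move=> fgI; pose Ib : {pred B^o} := fun a => `[< I a >].
have eI a : a \in Ib <-> I a by rewrite /Ib unfold_in; split=> /asboolP.
apply: (stably_free_on_ext eI); apply/stably_free_subP/ideals_sf.
by apply: fg_on_ext fgI => a; rewrite eI.
Qed.

Definition row_head k (x : 'rV[B]_(1 + k)) : B^o := x 0 (lshift k 0).

Lemma row_head_linear k : linear_on (fun _ => True) (@row_head k).
Proof. by split=> [x y _ _|a x _]; rewrite /row_head mxE. Qed.

Lemma row_head_row_mx k (c : 'rV[B]_1) (y : 'rV[B]_k) :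
  row_head (row_mx c y) = c 0 0.
Proof. by rewrite /row_head row_mxEl. Qed.

Lemma row_head0 k (x : 'rV[B]_(1 + k)) : row_head x = 0 -> x = row_mx 0 (rsubmx x).
Proof.
move=> x0; rewrite -{1}(hsubmxK x); congr row_mx.
by apply/rowP => i; rewrite ord1 !mxE -x0.
Qed.

(* Induction step: a f.g. submodule S of B^(1+k) is the direct sum of the
   left ideal I of its first coordinates and of the f.g. submodule K of B^k
   formed by the tails of its elements with first coordinate 0. *)
Lemma free_submodule_step k :
  (forall S : 'rV[B]_k -> Prop, fg_on S -> stably_free_on S) ->
  forall S : 'rV[B]_(1 + k) -> Prop, fg_on S -> stably_free_on S.
Proof.
move=> IH S fgS; have hS := fg_on_submodule fgS.
have hhd : linear_on S (@row_head k).
  by have [hD hZ] := row_head_linear k; split=> *; [apply: hD | apply: hZ].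
pose I a := exists2 x, S x & row_head x = a.
have fgI : fg_on I := fg_on_image fgS hhd.
have I_hd x : S x -> I (row_head x) by exists x.
have [sec [hsec S_sec hd_sec]] := stably_free_lift hS (fg_on_submodule fgI) hhd
  (fun a Ia => Ia) (fg_ideal_stably_free fgI).
have [hpr S_pr hd_pr] := kernel_projP hS hhd I_hd hsec S_sec hd_sec.
pose K y := S (row_mx 0 y).
pose kap x := rsubmx (kernel_proj (@row_head k) sec x).
have pr_kap x : S x -> kernel_proj (@row_head k) sec x = row_mx 0 (kap x).
  by move=> Sx; apply: row_head0; apply: hd_pr.
have K_kap x : S x -> K (kap x) by move=> Sx; rewrite /K -pr_kap //; apply: S_pr.
have hkap : linear_on S kap.
  by have [prD prZ] := hpr; split=> *; rewrite /kap (prD, prZ) // (linearD, linearZ).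
have decomp x : S x -> x = sec (row_head x) + row_mx 0 (kap x).
  by move=> Sx; rewrite -pr_kap // /kernel_proj addrC subrK.
have sec0 : sec 0 = 0 := linear_on0 (fg_on_submodule fgI) hsec.
have kap_row y : kap (row_mx 0 y) = y.
  by rewrite /kap /kernel_proj row_head_row_mx mxE sec0 subr0 row_mxKr.
have fgK : fg_on K.
  apply: fg_on_ext (fg_on_image fgS hkap) => y.
  by split=> [[x Sx <-]|Ky]; [apply: K_kap | exists (row_mx 0 y); rewrite ?kap_row].
apply: (stably_free_sum hkap hhd _ _ _ (IH K fgK) (fg_ideal_stably_free fgI)).
- by move=> x Sx; split; [apply: K_kap | apply: I_hd].
- by move=> x x' Sx Sx' ek eh; rewrite (decomp x Sx) (decomp x' Sx') ek eh.
move=> y a Ky Ia; have hd_x : row_head (sec a + row_mx 0 y) = a.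
  by rewrite (linD (row_head_linear k)) // hd_sec // row_head_row_mx mxE addr0.
exists (sec a + row_mx 0 y); split=> //.
- exact: (subD hS (S_sec _ Ia) Ky).
- by rewrite /kap /kernel_proj hd_x [sec a + _]addrC addrK row_mxKr.
Qed.

Lemma free_submodule_stably_free k (S : 'rV[B]_k -> Prop) :
  fg_on S -> stably_free_on S.
Proof.
elim: k S => [|k IH] S fgS; last exact: free_submodule_step.
exists 0%N, 0%N, 0%N, (fun _ => 0), (fun _ => 0); split=> //.
- by split=> *; rewrite ?addr0 ?scaler0.
- by split=> *; rewrite ?addr0 ?scaler0.
- by move=> x x' u u' *; split; apply/rowP => -[].
- move=> w; exists 0, 0; split; last by apply/rowP => -[].
  exact: sub0 (fg_on_submodule fgS).
Qed.

End FreeSubmodules.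

Section OreEmbedding.
Variables (B : nzRingType) (hdom : is_domain B) (hl : left_ore B) (hr : right_ore B).

Lemma scale_row_eq0 k (a : B) (y : 'rV[B]_k) : a != 0 -> a *: y = 0 -> y = 0.
Proof.
move=> a0 /rowP ay0; apply/rowP => j; move: (ay0 j); rewrite !mxE.
by case/hdom => // a0'; rewrite a0' eqxx in a0.
Qed.

Lemma mulmx_scalarE m n (y : 'M[B]_(m, n)) c i j : (y *m c%:M) i j = y i j * c.
Proof. by rewrite -diag_const_mx mul_mx_diag !mxE. Qed.

Lemma mulmx_scalar_eq0 k (c : B) (y : 'rV[B]_k) : c != 0 -> y *m c%:M = 0 -> y = 0.
Proof.
move=> c0 /rowP yc0; apply/rowP => j; move: (yc0 j); rewrite mulmx_scalarE mxE.
by case/hdom => // c0'; rewrite c0' eqxx in c0.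
Qed.

Lemma right_ore_seq (a : B) (s : seq B) : a != 0 ->
  exists2 c, c != 0 & forall t, t \in s -> exists z, t * c = a * z.
Proof.
move=> a0; elim: s => [|t s [c c0 hc]]; first by exists 1; rewrite ?oner_eq0.
have [tc0|tc0] := eqVneq (t * c) 0.
  exists c => // t'; rewrite inE => /predU1P [->|/hc //].
  by exists 0; rewrite tc0 mulr0.
have [c' [d [E tcc0]]] := hr tc0 a0.
exists (c * c').
  by apply: contraNneq tcc0; rewrite -mulrA => ->; rewrite mulr0.
move=> t'; rewrite inE => /predU1P [->|/hc [z Ez]]; first by exists d; rewrite mulrA.
by exists (z * c'); rewrite mulrA Ez mulrA.
Qed.

Lemma right_ore_row (a : B) k (y : 'rV[B]_k) : a != 0 ->
  exists c (z : 'rV[B]_k), c != 0 /\ y *m c%:M = a *: z.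
Proof.
move=> a0; have [c c0 hc] := right_ore_seq [seq y 0 j | j <- enum 'I_k] a0.
have /fin_all_exists [z hz] : forall j : 'I_k, exists z, y 0 j * c = a * z.
  by move=> j; apply: hc; apply: map_f; rewrite mem_enum.
by exists c, (\row_j z j); split=> //; apply/rowP => j; rewrite mulmx_scalarE !mxE.
Qed.

Variables (M : lmodType B) (htf : torsion_free M).

Definition embeds (Q : M -> Prop) : Prop :=
  exists k (phi : M -> 'rV[B]_k),
    linear_on Q phi /\ forall x, Q x -> phi x = 0 -> x = 0.

Lemma embeds_sub (Q Q' : M -> Prop) :
  (forall x, Q x -> Q' x) -> embeds Q' -> embeds Q.
Proof.
move=> QQ' [k [phi [[phiD phiZ] phi_inj]]].
by exists k, phi; split; first split; auto.
Qed.

Definition adjoin (P : M -> Prop) (w x : M) : Prop :=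
  exists s b, P s /\ x = s + b *: w.

Section Adjoin.
Variables (P : M -> Prop) (hP : submodule P) (w : M).

Lemma embeds_adjoin_of k (V : M -> B -> 'rV[B]_k) :
  (forall s s' b b', P s -> P s' -> V (s + s') (b + b') = V s b + V s' b') ->
  (forall a s b, P s -> V (a *: s) (a * b) = a *: V s b) ->
  (forall s b, P s -> s + b *: w = 0 <-> V s b = 0) -> embeds (adjoin P w).
Proof.
move=> VD VZ V0.
have VN s b : P s -> V (- s) (- b) = - V s b.
  by move=> Ps; rewrite -[- s]scaleN1r -[- b]mulN1r VZ // scaleN1r.
have V_wd s s' b b' : P s -> P s' -> s + b *: w = s' + b' *: w -> V s b = V s' b'.
  move=> Ps Ps' E; have PNs' := subN hP Ps'.
  apply/eqP; rewrite -subr_eq0 -VN // -VD //; apply/eqP/V0; first exact: subD.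
  by rewrite scalerBl addrACA -opprD E subrr.
pose Rep x (p : (M * B)%type) := adjoin P w x -> P p.1 /\ x = p.1 + p.2 *: w.
have [rep hrep] : {rep : M -> (M * B)%type & forall x, Rep x (rep x)}.
  apply: choice => x; have [[s [b [Ps Ex]]]|nQ] := EM (adjoin P w x).
    by exists (s, b).
  by exists (0, 0) => /nQ.
pose phi x := V (rep x).1 (rep x).2.
have phiE s b : P s -> phi (s + b *: w) = V s b.
  move=> Ps; have Qx : adjoin P w (s + b *: w) by exists s, b.
  by have [Pr Er] := hrep _ Qx; apply: V_wd; rewrite -?Er.
exists k, phi; split; first split.
- move=> _ _ [s [b [Ps ->]]] [s' [b' [Ps' ->]]].
  by rewrite addrACA -scalerDl !phiE ?VD //; apply: subD.
- move=> a _ [s [b [Ps ->]]].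
  by rewrite scalerDr scalerA !phiE ?VZ //; apply: subZ.
- by move=> _ [s [b [Ps ->]]]; rewrite phiE // => /V0 ->.
Qed.

Hypothesis P_embeds : embeds P.

(* B w meets P only in 0: a new coordinate records the coefficient of w. *)
Lemma embeds_adjoin_free : (forall a, P (a *: w) -> a = 0) -> embeds (adjoin P w).
Proof.
move=> Pw0; have [k [phi [[phiD phiZ] phi_inj]]] := P_embeds.
have phi0 : phi 0 = 0 := linear_on0 hP (LinearOn phiD phiZ).
apply: (@embeds_adjoin_of (k + 1)
  (fun s b => row_mx (phi s) (const_mx b : 'rV_1))).
- move=> s s' b b' Ps Ps'; rewrite phiD // add_row_mx; congr row_mx.
  by apply/rowP => j; rewrite !mxE.
- move=> a s b Ps; rewrite phiZ // scale_row_mx; congr row_mx.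
  by apply/rowP => j; rewrite !mxE.
move=> s b Ps; split=> [sbw0|].
  have b0 : b = 0 by apply: Pw0; rewrite -[b *: w](addKr s) sbw0 addr0; apply: subN.
  move: sbw0; rewrite b0 scale0r addr0 => ->; rewrite phi0 -row_mx0.
  by congr row_mx; apply/rowP => j; rewrite !mxE.
rewrite -row_mx0 => /eq_row_mx [/(phi_inj _ Ps) -> /rowP /(_ 0)].
by rewrite !mxE => ->; rewrite scale0r addr0.
Qed.

(* a w lies in P for some a != 0: as phi (a w) c = a z for some c != 0 (right
   Ore), s + b w |-> phi s c + b z extends the embedding phi (-) c of P;
   injectivity follows from the left Ore condition and torsion-freeness. *)
Lemma embeds_adjoin_torsion a : a != 0 -> P (a *: w) -> embeds (adjoin P w).
Proof.
move=> a0 Paw; have [k [phi [[phiD phiZ] phi_inj]]] := P_embeds.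
have phi0 : phi 0 = 0 := linear_on0 hP (LinearOn phiD phiZ).
have [c [z [c0 Ez]]] := right_ore_row (phi (a *: w)) a0.
pose V s b := phi s *m c%:M + b *: z.
have key s b p r : P s -> p * b = r * a ->
    P (p *: (s + b *: w)) /\ p *: V s b = phi (p *: (s + b *: w)) *m c%:M.
  move=> Ps E; rewrite scalerDr scalerA E -scalerA.
  have Pps := subZ hP p Ps; have Praw := subZ hP r Paw.
  split; first exact: (subD hP Pps Praw).
  rewrite phiD // (phiZ p s Ps) (phiZ r _ Paw) mulmxDl -!scalemxAl Ez.
  by rewrite /V scalerDr !scalerA E.
apply: (@embeds_adjoin_of k V).
- by move=> s s' b b' Ps Ps'; rewrite /V phiD // mulmxDl scalerDl addrACA.
- by move=> a' s b Ps; rewrite /V phiZ // -scalemxAl -scalerA scalerDr.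
move=> s b Ps; have [-> | b0] := eqVneq b 0.
  rewrite /V !scale0r !addr0; split=> [->|]; first by rewrite phi0 mul0mx.
  by move/(mulmx_scalar_eq0 c0)/(phi_inj _ Ps).
have [p [r [Epr pb0]]] := hl b0 a0.
have p0 : p != 0 by apply: contraNneq pb0 => ->; rewrite mul0r.
have [Pp pV] := key s b p r Ps Epr.
split=> [sbw0|V0].
  by apply: (scale_row_eq0 p0); rewrite pV sbw0 scaler0 phi0 mul0mx.
apply: (htf p0); apply: phi_inj => //; apply: (mulmx_scalar_eq0 c0).
by rewrite -pV V0 scaler0.
Qed.

Lemma embeds_adjoin : embeds (adjoin P w).
Proof.
have [[a [a0 Paw]]|none] := EM (exists a, a != 0 /\ P (a *: w)).
  exact: embeds_adjoin_torsion a0 Paw.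
apply: embeds_adjoin_free => a Paw; apply: (contra_notP _ none) => a0.
by exists a; split=> //; apply/eqP.
Qed.

End Adjoin.

Lemma embeds_lspan n (v : 'I_n -> M) : embeds (lspan v).
Proof.
elim: n v => [|n IH] v.
  exists 0%N, (fun _ => 0); split=> [|x [c ->] _]; last by rewrite big_ord0.
  by split=> *; rewrite ?addr0 ?scaler0.
pose v' i := v (widen_ord (leqnSn n) i).
apply: (@embeds_sub _ (adjoin (lspan v') (v ord_max))); last first.
  exact: (embeds_adjoin (lspan_submodule v') (v ord_max) (IH v')).
move=> _ [c ->]; rewrite big_ord_recr /=.
exists (\sum_i c (widen_ord (leqnSn n) i) *: v' i), (c ord_max); split=> //.
by exists (fun i => c (widen_ord (leqnSn n) i)).
Qed.

Lemma fg_torsion_free_embeds : fg_module M -> embeds (fun _ => True).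
Proof.
move=> [n [v hv]]; apply: (embeds_sub _ (embeds_lspan v)) => x _.
exact/(hv x).
Qed.
End OreEmbedding.

Section IdealModule.
Variables (B : nzRingType) (I : {pred B^o}).
Hypothesis I_submod : GRing.submod_closed I.

HB.instance Definition _ := GRing.isSubmodClosed.Build B B^o I I_submod.
Definition ideal_module := {a : B^o | a \in I}.
HB.instance Definition _ := SubChoice.copy ideal_module {a : B^o | a \in I}.
HB.instance Definition _ := [SubChoice_isSubLmodule of ideal_module by <:].

Definition to_ideal_module (a : B^o) : ideal_module := insubd 0 a.

Lemma to_ideal_moduleK a : a \in I -> val (to_ideal_module a) = a.
Proof. exact: insubdK. Qed.

Lemma to_ideal_module_linear : linear_on (fun a => a \in I) to_ideal_module.
Proof.
split=> [a b Ia Ib|c a Ia]; apply: val_inj.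
  by rewrite raddfD /= !to_ideal_moduleK //; apply: rpredD.
by rewrite linearZ /= !to_ideal_moduleK //; apply: rpredZ.
Qed.

Lemma ideal_module_fg : fg_sub I -> fg_module ideal_module.
Proof.
move=> [n [v hv]]; have Iv i : v i \in I by apply/hv; apply: lspan_gen.
exists n, (fun i => to_ideal_module (v i)) => z; split=> // _.
have [c Ec] := (hv (val z)).1 (valP z); exists c; apply: val_inj.
rewrite Ec linear_sum; apply: eq_bigr => i _.
by rewrite linearZ /= to_ideal_moduleK.
Qed.

Lemma ideal_module_torsion_free : is_domain B -> torsion_free ideal_module.
Proof.
move=> hdom a z a0 /(congr1 val); rewrite linearZ /= => /hdom [a0'|z0].
  by rewrite a0' eqxx in a0.
exact: val_inj.
Qed.

Lemma ideal_stably_free : stably_free ideal_module -> stably_free_sub I.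
Proof.
move/stably_free_subP => sfT; apply/stably_free_subP.
apply: (stably_free_on_iso to_ideal_module_linear _ _ sfT).
  by move=> a a' Ia Ia' /(congr1 val); rewrite !to_ideal_moduleK.
move=> z; split=> // _; exists (val z); first exact: valP.
by apply: val_inj; rewrite to_ideal_moduleK //; apply: valP.
Qed.

End IdealModule.

(* Over a domain, f.g. left ideals are f.g. torsion-free modules. *)
Lemma ideals_of_modules (B : nzRingType) :
  is_domain B -> fg_tf_left_modules_stably_free B -> fg_left_ideals_stably_free B.
Proof.
move=> hdom hM I fgI; have [I0 ID IZ] := fg_on_submodule (proj1 (fg_subP I) fgI).
have I_submod : GRing.submod_closed I.
  by split=> // a u v Iu Iv; apply: ID => //; apply: IZ.
apply: ideal_stably_free; apply: hM.
  exact: ideal_module_fg.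
exact: ideal_module_torsion_free.
Qed.

(* Over an Ore domain, a f.g. torsion-free module is isomorphic to a f.g.
   submodule of a free module. *)
Lemma modules_of_ideals (B : nzRingType) :
  ore_domain B -> fg_left_ideals_stably_free B -> fg_tf_left_modules_stably_free B.
Proof.
move=> [hdom [hl hr]] hI M fgM htf.
have [k [phi [hphi phi_inj]]] := fg_torsion_free_embeds hdom hl hr htf fgM.
have fgM' : fg_on (fun _ : M => True) by apply: fg_on_ext fgM.
have sf_img := free_submodule_stably_free hI (fg_on_image fgM' hphi).
apply/stably_free_subP; apply: (@stably_free_on_ext _ _ (fun _ => True)) => //.
apply: (stably_free_on_iso hphi _ _ sf_img) => // x x' _ _ E.
apply/eqP; rewrite -subr_eq0; apply/eqP/phi_inj => //.
by rewrite (linearB_on (submoduleT _) hphi) // E subrr.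
Qed.

Lemma ore_domain_opp (A : nzRingType) : ore_domain A -> ore_domain A^c.
Proof.
move=> [hdom [hl hr]]; split; last by split=> a b a0 b0; [apply: hr | apply: hl].
by move=> a b /hdom [] ->; [right | left].
Qed.

Theorem mainTheorem2 (A : nzRingType) (hA : ore_domain A) :
  (fg_tf_left_modules_stably_free A /\ fg_tf_left_modules_stably_free A^c)
  <-> (fg_left_ideals_stably_free A /\ fg_left_ideals_stably_free A^c).
Proof.
have hAc := ore_domain_opp hA.
split=> [[hM hMc]|[hI hIc]]; split.
- exact: ideals_of_modules (proj1 hA) hM.
- exact: ideals_of_modules (proj1 hAc) hMc.
- exact: modules_of_ideals hA hI.
- exact: modules_of_ideals hAc hIc.
Qed.
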